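(* Let $G$ be a finite group and $H$ a normal subgroup of $G$ containing $G'$ such that $|H|$ divides $[G:H]$. Then the square \[ \begin{array}{ccc} G/H & \xrightarrow{\ \widetilde{\operatorname{Ver}}\ } & H/H'\\ \downarrow{\scriptstyle \delta|_H} & & \downarrow{\scriptstyle\delta}\\ \dfrac{I_G/I_G^2}{\delta(H/G')} & \xrightarrow{\ S'\ } & \dfrac{I_H+I_GI_H}{I_GI_H} \end{array} \] commutes.
   Context: $I_G$ is the augmentation ideal of $\mathbb{Z}[G]$ (kernel of $\sum n_\sigma\sigma\mapsto\sum n_\sigma$), similarly $I_H\subseteq I_G$. $\delta\colon G/G'\to I_G/I_G^2$, $\sigma G'\mapsto(\sigma-1)+I_G^2$, and $\delta\colon H/H'\to(I_H+I_GI_H)/I_GI_H$, $hH'\mapsto(h-1)+I_GI_H$, are the canonical isomorphisms. $\delta|_H\colon G/H\to(I_G/I_G^2)/\delta(H/G')$ is the isomorphism induced by $\delta$ via $G/H\cong(G/G')/(H/G')$. With $g_1,\dots,g_n$ coset representatives of $H$ in $G$, $S\colon I_G/I_G^2\to(I_H+I_GI_H)/I_GI_H$ is $S(x)=x\cdot(g_1+\cdots+g_n)\bmod I_GI_H$, and $S'$ is the induced map on $(I_G/I_G^2)/\delta(H/G')$, $S'([x])=S(x)$. The transfer $\operatorname{Ver}(G\to H)\colon G/G'\to H/H'$ is induced by $g\mapsto\prod_i\phi(gg_i)^{-1}gg_i$ where $\phi(g)=g_k$ if $g\in g_kH$; $\widetilde{\operatorname{Ver}}\colon G/H\to H/H'$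 is the map it induces (well defined when $\operatorname{Ver}(G\to H)$ sends $H$ into $H'$). *)

From HB Require Import structures.
From mathcomp Require Import all_boot all_order all_algebra all_fingroup all_solvable.
Set Implicit Arguments. Unset Strict Implicit. Unset Printing Implicit Defensive.
Import GRing.Theory.

(* The integral group ring Z[gT] of the ambient finite group type gT, realised
   as finitely supported integer-valued functions on gT (all functions, gT being
   finite), with pointwise addition and convolution product.  Z[G] for a
   subgroup G is the set of elements supported in G. *)
Definition zg (gT : finGroupType) := {ffun gT -> int}.

Section GroupRing.
Variable gT : finGroupType.
Local Open Scope ring_scope.

Definition gel (x : gT) : zg gT := [ffun y => ((y == x) : nat)%:Z].

Definition gmul (a b : zg gT) : zg gT :=
  [ffun z => \sum_(x : gT) a x * b (x^-1 * z)%g].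

Definition supported (A : {set gT}) (a : zg gT) : bool :=
  [forall x, (x \notin A) ==> (a x == 0)].

Definition aug_ideal (A : {set gT}) (a : zg gT) : bool :=
  supported A a && (\sum_(x : gT) a x == 0).

Definition in_prod_ideal (P Q : zg gT -> bool) (a : zg gT) : Prop :=
  exists s : seq (zg gT * zg gT),
    all (fun pq => P pq.1 && Q pq.2) s /\ a = \sum_(pq <- s) gmul pq.1 pq.2.

Definition coset_rep (X H : {set gT}) (g : gT) : gT :=
  transversal_repr 1%g X (g *: H)%g.

Definition Ver (X H : {set gT}) (g : gT) : gT :=
  (\prod_(x in X) ((coset_rep X H (g * x))^-1 * (g * x)))%g.

End GroupRing.

From HB Require Import structures.
From mathcomp Require Import all_boot all_order all_algebra all_fingroup all_solvable.
Set Implicit Arguments.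
Unset Strict Implicit.
Unset Printing Implicit Defensive.

Import GRing.Theory.
Local Open Scope ring_scope.

(* With r(x) the representative of g x H in X and h(x) = r(x)^-1 g x in H, we
   have g x = r(x) h(x), and x |-> r(x) permutes X.  Since
   a b - a = (a - 1)(b - 1) + (b - 1), summing over X gives
     (g - 1) sum_x x = sum_x (r(x) - 1)(h(x) - 1) + sum_x (h(x) - 1),
   the terms r(x) - x cancelling.  The first sum lies in I_G I_H, and the same
   identity shows that prod_x h(x) - 1 = Ver(g) - 1 is congruent to
   sum_x (h(x) - 1) modulo I_G I_H. *)

Section GroupRingArithmetic.
Variable gT : finGroupType.
Implicit Types (a b c : zg gT) (x y : gT).

Lemma gmulDr a b c : gmul a (b + c) = gmul a b + gmul a c.
Proof.
by apply/ffunP=> z; rewrite !ffunE -big_split; apply: eq_bigr=> x _; rewrite !ffunE mulrDr.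
Qed.

Lemma gmulr0 a : gmul a 0 = 0.
Proof. by apply/ffunP=> z; rewrite !ffunE big1 // => x _; rewrite ffunE mulr0. Qed.

Lemma gmulNl a b : gmul (- a) b = - gmul a b.
Proof.
by apply/ffunP=> z; rewrite !ffunE -sumrN; apply: eq_bigr=> x _; rewrite !ffunE mulNr.
Qed.

Lemma gmulBl a b c : gmul (a - b) c = gmul a c - gmul b c.
Proof.
by apply/ffunP=> z; rewrite !ffunE -sumrB; apply: eq_bigr=> x _; rewrite !ffunE mulrBl.
Qed.

Lemma gmulBr a b c : gmul a (b - c) = gmul a b - gmul a c.
Proof.
by apply/ffunP=> z; rewrite !ffunE -sumrB; apply: eq_bigr=> x _; rewrite !ffunE mulrBr.
Qed.

Lemma gmul_sumr a (I : Type) (r : seq I) (P : pred I) (F : I -> zg gT) :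
  gmul a (\sum_(i <- r | P i) F i) = \sum_(i <- r | P i) gmul a (F i).
Proof. exact: (big_morph (gmul a) (gmulDr a) (gmulr0 a)). Qed.

Lemma gmul_gel x y : gmul (gel x) (gel y) = gel (x * y)%g.
Proof.
apply/ffunP=> z; rewrite !ffunE (bigD1 x) //= big1 => [|w /negbTE wx]; last first.
  by rewrite !ffunE wx mul0r.
by rewrite !ffunE eqxx mul1r addr0 (can2_eq (mulKVg x) (mulKg x)).
Qed.

Lemma sum_gel x : \sum_y gel x y = 1.
Proof.
rewrite (bigD1 x) //= big1 => [|y /negbTE yx]; last by rewrite ffunE yx.
by rewrite ffunE eqxx addr0.
Qed.

Lemma gelMBl x y : gel (x * y)%g - gel x =
  gmul (gel x - gel 1) (gel y - gel 1) + (gel y - gel 1).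
Proof. by rewrite gmulBl !gmulBr !gmul_gel !mul1g !mulg1 subrK. Qed.

Lemma gelMB1 x y : gel (x * y)%g - gel 1 =
  gmul (gel x - gel 1) (gel y - gel 1) + (gel x - gel 1) + (gel y - gel 1).
Proof. by rewrite addrAC -gelMBl addrA subrK. Qed.

Lemma gmul_gelB1_gel_factor g x r h : (r * h = g * x)%g ->
  gmul (gel g - gel 1) (gel x) =
  gmul (gel r - gel 1) (gel h - gel 1) + (gel h - gel 1) + (gel r - gel x).
Proof. by move=> rh; rewrite gmulBl !gmul_gel mul1g -gelMBl rh addrA subrK. Qed.

End GroupRingArithmetic.

Section ProductIdeal.
Variable gT : finGroupType.
Variables G H : {set gT}.
Implicit Types a b : zg gT.
Local Notation IGIH := (in_prod_ideal (aug_ideal G) (aug_ideal H)).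

Lemma prod_ideal0 : IGIH 0.
Proof. by exists [::]; rewrite big_nil. Qed.

Lemma prod_idealD a b : IGIH a -> IGIH b -> IGIH (a + b).
Proof. by move=> [s [As ->]] [t [At ->]]; exists (s ++ t); rewrite all_cat As At big_cat. Qed.

Lemma aug_idealN (A : {set gT}) a : aug_ideal A a -> aug_ideal A (- a).
Proof.
case/andP=> /forallP suppA /eqP sum0; apply/andP; split.
  by apply/forallP=> x; rewrite ffunE oppr_eq0; apply: suppA.
by under eq_bigr do rewrite ffunE; rewrite sumrN sum0 oppr0.
Qed.

Lemma prod_idealN a : IGIH a -> IGIH (- a).
Proof.
move=> [s [As ->]]; exists [seq (- pq.1, pq.2) | pq <- s]; split.
  by rewrite all_map; apply/allP=> pq /(allP As) /andP[Ap Aq] /=; rewrite aug_idealN.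
by rewrite big_map -sumrN; apply: eq_bigr=> pq _; rewrite gmulNl.
Qed.

Lemma prod_idealB a b : IGIH a -> IGIH b -> IGIH (a - b).
Proof. by move=> Ia Ib; apply: prod_idealD Ia _; apply: prod_idealN. Qed.

Lemma prod_ideal_gmul a b : aug_ideal G a -> aug_ideal H b -> IGIH (gmul a b).
Proof. by move=> Ga Hb; exists [:: (a, b)]; rewrite /= Ga Hb big_seq1. Qed.

Lemma prod_ideal_sum (I : Type) (r : seq I) (P : pred I) (F : I -> zg gT) :
  (forall i, P i -> IGIH (F i)) -> IGIH (\sum_(i <- r | P i) F i).
Proof.
move=> IF; elim: r => [|i r IHr]; first by rewrite big_nil; apply: prod_ideal0.
by rewrite big_cons; case: ifP => // Pi; apply: prod_idealD => //; apply: IF.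
Qed.

End ProductIdeal.

Lemma aug_ideal_gelB1 (gT : finGroupType) (A : {group gT}) (x : gT) :
  x \in A -> aug_ideal A (gel x - gel 1).
Proof.
move=> Ax; apply/andP; split.
  apply/forallP=> y; apply/implyP=> Ay; rewrite !ffunE.
  have neqy z : z \in A -> (y == z) = false by move=> Az; apply: contraNF Ay => /eqP ->.
  by rewrite !neqy ?group1.
by under eq_bigr do rewrite ffunE [X in _ + X]ffunE; rewrite sumrB !sum_gel subrr.
Qed.

(* delta is a homomorphism modulo I_G I_H *)
Lemma prod_ideal_gel_prod (gT : finGroupType) (G H : {group gT})
    (I : Type) (r : seq I) (P : pred I) (f : I -> gT) :
  H \subset G -> (forall i, P i -> f i \in H) ->
  in_prod_ideal (aug_ideal G) (aug_ideal H)
    (gel (\prod_(i <- r | P i) f i)%g - gel 1 - \sum_(i <- r | P i) (gel (f i) - gel 1)).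
Proof.
move=> sHG Hf; elim: r => [|i r IHr]; first by rewrite !big_nil !subrr; apply: prod_ideal0.
rewrite !big_cons; case: ifP => // Pi.
rewrite gelMB1 opprD addrACA addrK; apply: prod_idealD => //.
apply: prod_ideal_gmul; apply: aug_ideal_gelB1; first exact: (subsetP sHG _ (Hf i Pi)).
by apply: group_prod => j; apply: Hf.
Qed.

Section Transversal.
Variables (gT : finGroupType) (G H : {group gT}) (X : {set gT}).
Hypotheses (sHG : H \subset G) (trX : is_transversal X (lcosets H G) G).

Lemma lcoset_in_lcosets a : a \in G -> (a *: H)%g \in lcosets H G.
Proof. by move=> Ga; rewrite mem_lcosets mulGSid. Qed.

Lemma coset_rep_mem a : a \in G -> coset_rep X H a \in X.
Proof. by move/lcoset_in_lcosets; apply: (repr_mem_transversal trX). Qed.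

Lemma coset_rep_lcoset a : a \in G -> coset_rep X H a \in (a *: H)%g.
Proof. by move/lcoset_in_lcosets; apply: (repr_mem_pblock trX). Qed.

Lemma coset_repVM a : a \in G -> ((coset_rep X H a)^-1 * a)%g \in H.
Proof. by move/coset_rep_lcoset; rewrite mem_lcoset -groupV invMg invgK. Qed.

Lemma coset_rep_id x : x \in X -> coset_rep X H x = x.
Proof.
move=> Xx; have Gx := subsetP (transversal_sub trX) x Xx.
apply/esym/set1P; rewrite -(setI_transversal_pblock trX 1%g (lcoset_in_lcosets Gx)).
by rewrite inE Xx lcoset_refl.
Qed.

Variable g : gT.
Hypothesis Gg : g \in G.
Local Notation rep x := (coset_rep X H (g * x)%g).
Local Notation fac x := ((coset_rep X H (g * x))^-1 * (g * x))%g.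

Lemma mulg_transversal_mem x : x \in X -> (g * x)%g \in G.
Proof. by move=> Xx; rewrite groupM // (subsetP (transversal_sub trX)). Qed.

Lemma coset_rep_mulg_mem x : x \in X -> rep x \in X.
Proof. by move/mulg_transversal_mem; apply: coset_rep_mem. Qed.

Lemma transfer_factor_mem x : x \in X -> fac x \in H.
Proof. by move/mulg_transversal_mem; apply: coset_repVM. Qed.

Lemma coset_rep_mulg_inj : {in X &, injective (fun x => rep x)}.
Proof.
move=> x y Xx Xy /= eq_rep; rewrite -(coset_rep_id Xx) -(coset_rep_id Xy).
have gxH : rep y \in ((g * x) *: H)%g.
  by rewrite -eq_rep coset_rep_lcoset ?mulg_transversal_mem.
have gyH : rep y \in ((g * y) *: H)%g by rewrite coset_rep_lcoset ?mulg_transversal_mem.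
have: (g *: (x *: H) = g *: (y *: H))%g.
  by rewrite -!lcosetM -(lcoset_eqP gxH) -(lcoset_eqP gyH).
by rewrite /coset_rep => /(can_inj (lcosetK g)) ->.
Qed.

Lemma sum_gel_coset_rep_mulg : \sum_(x in X) gel (rep x) = \sum_(x in X) gel x.
Proof.
have rep_X : [set rep x | x in X] = X.
  apply/eqP; rewrite eqEcard card_in_imset ?leqnn ?andbT; last exact: coset_rep_mulg_inj.
  by apply/subsetP=> _ /imsetP[x Xx ->]; apply: coset_rep_mulg_mem.
by rewrite -[in RHS]rep_X big_imset //; apply: coset_rep_mulg_inj.
Qed.

Lemma gmul_gelB1_transversal_sum :
  gmul (gel g - gel 1) (\sum_(x in X) gel x) =
  \sum_(x in X) (gmul (gel (rep x) - gel 1) (gel (fac x) - gel 1) + (gel (fac x) - gel 1)).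
Proof.
rewrite gmul_sumr.
under eq_bigr => x _ do rewrite (gmul_gelB1_gel_factor (mulKVg (rep x) (g * x)%g)).
by rewrite big_split /= sumrB sum_gel_coset_rep_mulg subrr addr0.
Qed.

End Transversal.

Theorem lemma3p7 (gT : finGroupType) (G H : {group gT}) :
  (H <| G)%g -> (G^`(1) \subset H)%g -> (#|H| %| (#|G : H|)%g)%N ->
  forall X : {set gT}, is_transversal X (lcosets H G) G ->
  forall g : gT, g \in G ->
  in_prod_ideal (aug_ideal G) (aug_ideal H)
    ((gel (Ver X H g) - gel 1%g)
       - gmul (gel g - gel 1%g) (\sum_(x in X) gel x)).
Proof.
move=> /andP[sHG _] _ _ X trX g Gg.
rewrite (gmul_gelB1_transversal_sum sHG trX Gg) big_split /= opprD addrA addrAC.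
apply: prod_idealB.
  by apply: prod_ideal_gel_prod => // x; apply: (transfer_factor_mem sHG trX Gg).
apply: prod_ideal_sum => x Xx; apply: prod_ideal_gmul; apply: aug_ideal_gelB1.
  by rewrite (subsetP (transversal_sub trX)) // (coset_rep_mulg_mem sHG trX Gg).
exact: (transfer_factor_mem sHG trX Gg).
Qed.
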